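(* Let $K$ be an algebraically closed field of characteristic three, and let $G$ be a small finite subgroup of $\mathrm{SL}(3,K)$ of order $3^r$. Then $G\cong C_3^r$ (the direct product of $r$ copies of the cyclic group of order three).
   Context: An element $g\in G\subset\mathrm{GL}(3,K)$ is a pseudo-reflection if its fixed subspace in $K^3$ has dimension $2$; $G$ is small if it contains no pseudo-reflection. *)

From HB Require Import structures.
From mathcomp Require Import all_boot all_order all_algebra all_field.
From mathcomp Require Import finmap.
Set Implicit Arguments. Unset Strict Implicit. Unset Printing Implicit Defensive.
Import GRing.Theory.
Local Open Scope ring_scope.

(* Fixed subspace of g acting on K^3 (row-vector convention):
   the row space of kermx (g - 1), i.e. {v | v *m g = v}. *)
Definition fixed_space (K : fieldType) (g : 'M[K]_3) : 'M[K]_3 :=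
  kermx (g - 1%:M).

Definition pseudo_reflection (K : fieldType) (g : 'M[K]_3) : bool :=
  \rank (fixed_space g) == 2%N.

Definition is_finite_subgroup_SL3 (K : fieldType) (G : {fset 'M[K]_3}) : Prop :=
  [/\ (1%:M : 'M[K]_3) \in G,
      (forall g h, g \in G -> h \in G -> g *m h \in G),
      (forall g, g \in G -> g \in unitmx /\ invmx g \in G) &
      (forall g, g \in G -> \det g = 1)].

Definition small (K : fieldType) (G : {fset 'M[K]_3}) : Prop :=
  forall g, g \in G -> ~~ pseudo_reflection g.

(* The direct product C_3^r, as the additive group of functions 'I_r -> Z/3. *)
Definition C3pow (r : nat) := {ffun 'I_r -> 'Z_3}.

Definition iso_C3pow (K : fieldType) (G : {fset 'M[K]_3}) (r : nat) : Prop :=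
  exists phi : C3pow r -> 'M[K]_3,
    [/\ injective phi,
        (forall a, phi a \in G),
        (forall g, g \in G -> exists a, phi a = g) &
        (forall a b, phi (a + b) = phi a *m phi b)].

From HB Require Import structures.
From mathcomp Require Import all_boot all_order all_algebra all_field all_fingroup all_solvable.
From mathcomp Require Import finmap.
Set Implicit Arguments. Unset Strict Implicit. Unset Printing Implicit Defensive.
Import GRing.Theory.
Local Open Scope ring_scope.

(* In characteristic 3, g^3 - 1 = (g - 1)^3 for every matrix g, so in a 3-group of
   3x3 matrices each g is unipotent with g^3 = 1.  Without pseudo-reflections,
   g - 1 has rank exactly 2 for g != 1, i.e. it is a regular nilpotent matrix, and
   the matrices commuting with a regular nilpotent N are the polynomials in N,
   hence commute with each other.  Applied to g = z for a central z != 1 of the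
   3-group, this shows that the group is abelian, hence elementary abelian of
   order 3^r. *)

Lemma exprB1_pchar (R : nzRingType) p (x : R) m :
  p \in [pchar R] -> (x - 1) ^+ (p ^ m) = x ^+ (p ^ m) - 1.
Proof.
move=> pcharRp; elim: m => [|m IHm]; first by rewrite !expr1.
rewrite expnSr !exprM IHm -!(pFrobenius_autE pcharRp).
by rewrite pFrobenius_autB_comm ?pFrobenius_aut1 //; apply: commr1.
Qed.

Lemma nilpotent_mx_expSn (K : fieldType) n (N : 'M[K]_n.+1) k :
  N ^+ k = 0 -> N ^+ n.+1 = 0.
Proof.
move=> Nk0.
have : mxminpoly N %| ('X - 0%:P) ^+ k.
  by apply: mxminpoly_min; rewrite subr0 rmorphXn /= horner_mx_X.
case/dvdp_exp_XsubCP=> j _.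
rewrite eqp_monic ?mxminpoly_monic ?monic_exp ?monicXsubC // => /eqP minN.
have le_jn : (j <= n.+1)%N.
  have := dvdp_leq (monic_neq0 (char_poly_monic N)) (mxminpoly_dvd_char N).
  by rewrite size_char_poly minN size_exp_XsubC.
have := mx_root_minpoly N.
rewrite minN subr0 rmorphXn /= horner_mx_X.
by move/(congr1 (fun M => M * N ^+ (n.+1 - j))); rewrite mul0r -exprD subnKC.
Qed.

Lemma sqr_mx_neq0 (K : fieldType) n (N : 'M[K]_n.+1) :
  (n.+1 < 2 * \rank N)%N -> N ^+ 2 != 0.
Proof.
move=> rankN; apply: contraTneq rankN => NN0; rewrite -leqNgt.
have := mxrank_mul_ker N N; rewrite mulmxE -expr2 NN0 mxrank0 add0n => rk_cap.
have := mxrankS (capmxSr N (kermx N)); rewrite rk_cap mxrank_ker.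
by rewrite mul2n -addnn leq_subRL ?rank_leq_row.
Qed.

Section RegularNilpotent.
Variables (K : fieldType) (n : nat) (N : 'M[K]_n.+1) (v : 'rV[K]_n.+1).
Hypotheses (N_nil : N ^+ n.+1 = 0) (vN_neq0 : v *m N ^+ n != 0).

Definition krylov_mx : 'M[K]_n.+1 := \matrix_(j < n.+1) (v *m N ^+ j).

Definition poly_of_row (c : 'rV[K]_n.+1) : {poly K} := \sum_(j < n.+1) c 0 j *: 'X^j.

Lemma mul_krylov_mx c : c *m krylov_mx = v *m horner_mx N (poly_of_row c).
Proof.
rewrite mulmx_sum_row linear_sum mulmx_sumr; apply: eq_bigr => j _.
by rewrite rowK linearZ rmorphXn /= horner_mx_X scalemxAr.
Qed.

Lemma krylov_mx_unit : krylov_mx \in unitmx.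
Proof.
rewrite -row_free_unit -kermx_eq0; apply/rowV0P => c.
rewrite sub_kermx mulmx_sum_row => /eqP cB0.
apply/rowP => i; rewrite mxE; apply/eqP/negPn/negP => ci_neq0.
have [k ck_neq0 k_min] :=
  arg_minnP (fun j : 'I_n.+1 => val j) (ci_neq0 : (fun j => c 0 j != 0) i).
have N_big m : (n < m)%N -> N ^+ m = 0.
  by move=> lt_nm; rewrite -(subnKC lt_nm) exprD N_nil mul0r.
(* Multiplying by N^(n - k), with k the lowest index of a nonzero coefficient,
   kills every term of the relation but the k-th one. *)
move/(congr1 (mulmx^~ (N ^+ (n - k)))): cB0; rewrite mul0mx mulmx_suml.
rewrite (bigD1 k) //= big1 ?addr0 => [|j neq_jk]; last first.
  have [->|cj_neq0] := eqVneq (c 0 j) 0; first by rewrite scale0r mul0mx.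
  have lt_kj : (k < j)%N by rewrite ltn_neqAle (k_min j cj_neq0) andbT eq_sym.
  rewrite rowK -scalemxAl -mulmxA mulmxE -exprD N_big ?mulmx0 ?scaler0 //.
  by rewrite addnBA ?leq_ord // ltn_subRL ltn_add2r.
rewrite rowK -scalemxAl -mulmxA mulmxE -exprD (subnKC (leq_ord k)).
by move/eqP; rewrite scaler_eq0 (negbTE ck_neq0) (negbTE vN_neq0).
Qed.

Lemma cent_regular_nilpotent_horner A : GRing.comm A N ->
  A = horner_mx N (poly_of_row (v *m A *m invmx krylov_mx)).
Proof.
move=> cAN; set q := horner_mx N _.
have vA : v *m A = v *m q by rewrite -mul_krylov_mx mulmxKV ?krylov_mx_unit.
have BA : krylov_mx *m A = krylov_mx *m q.
  apply/row_matrixP => j; rewrite !row_mul rowK -!mulmxA !mulmxE.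
  have <- : GRing.comm A (N ^+ j) by apply/commrX.
  have <- : GRing.comm q (N ^+ j).
    by rewrite -(horner_mx_X N) -rmorphXn; apply: comm_horner_mx2.
  by rewrite -!mulmxE !mulmxA vA.
by rewrite -(mulKmx krylov_mx_unit A) BA mulKmx ?krylov_mx_unit.
Qed.

End RegularNilpotent.

Lemma regular_nilpotent_cent_comm (K : fieldType) n (N A B : 'M[K]_n.+1) :
  N ^+ n.+1 = 0 -> N ^+ n != 0 -> GRing.comm A N -> GRing.comm B N ->
  GRing.comm A B.
Proof.
move=> N_nil /rowV0Pn[_ /submxP[v ->] vN_neq0] cAN cBN.
rewrite (cent_regular_nilpotent_horner N_nil vN_neq0 cAN).
rewrite (cent_regular_nilpotent_horner N_nil vN_neq0 cBN).
exact: comm_horner_mx2.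
Qed.

Lemma rank_unipotent_nonreflection (K : fieldType) (g : 'M[K]_3) k :
  (g - 1) ^+ k = 0 -> g != 1 -> ~~ pseudo_reflection g -> \rank (g - 1) = 2%N.
Proof.
move=> g_unip g_neq1 g_nonrefl.
have rank_neq0 : \rank (g - 1) != 0%N by rewrite mxrank_eq0 subr_eq0.
have rank_neq1 : \rank (g - 1) != 1%N.
  by apply: contra g_nonrefl => /eqP rank1; rewrite /pseudo_reflection mxrank_ker rank1.
have rank_neq3 : \rank (g - 1) != 3%N.
  apply/eqP => rank3.
  have : (g - 1) ^+ k \in unitmx by apply: unitrX; rewrite -row_free_unit /row_free rank3.
  by rewrite g_unip unitr0.
move: (rank_leq_row (g - 1)) rank_neq0 rank_neq1 rank_neq3.
by case: (\rank (g - 1)) => [|[|[|[|]]]].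
Qed.

Section GroupAxioms.
Variables (K : fieldType) (G : {fset 'M[K]_3}).
Hypothesis HG : is_finite_subgroup_SL3 G.

Lemma group_fset1 : 1%:M \in G. Proof. by case: HG. Qed.
Lemma group_fsetM g h : g \in G -> h \in G -> g *m h \in G.
Proof. by case: HG => _ GM _ _; apply: GM. Qed.
Lemma group_fset_unit g : g \in G -> g \in unitmx.
Proof. by case: HG => _ _ GV _ /GV[]. Qed.
Lemma group_fsetV g : g \in G -> invmx g \in G.
Proof. by case: HG => _ _ GV _ /GV[]. Qed.

End GroupAxioms.

Definition matrix_group (K : fieldType) (G : {fset 'M[K]_3})
  of is_finite_subgroup_SL3 G : predArgType := fset_sub_type G.
HB.instance Definition _ K G HG := Finite.copy (@matrix_group K G HG) (fset_sub_type G).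

Section MatrixGroupLaw.
Variables (K : fieldType) (G : {fset 'M[K]_3}) (HG : is_finite_subgroup_SL3 G).
Local Notation gT := (matrix_group HG).

Definition matrix_group_mul (x y : gT) : gT :=
  FSetSub (group_fsetM HG (fsvalP x) (fsvalP y)).
Definition matrix_group_one : gT := FSetSub (group_fset1 HG).
Definition matrix_group_inv (x : gT) : gT := FSetSub (group_fsetV HG (fsvalP x)).

Lemma matrix_group_mulA : associative matrix_group_mul.
Proof. by move=> x y z; apply: val_inj; rewrite /= mulmxA. Qed.
Lemma matrix_group_mul1 : left_id matrix_group_one matrix_group_mul.
Proof. by move=> x; apply: val_inj; rewrite /= mul1mx. Qed.
Lemma matrix_group_mulV : left_inverse matrix_group_one matrix_group_inv matrix_group_mul.
Proof. by move=> x; apply: val_inj; rewrite /= mulVmx ?(group_fset_unit HG (fsvalP x)). Qed.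

End MatrixGroupLaw.

HB.instance Definition _ K G HG := Finite_isGroup.Build (@matrix_group K G HG)
  (@matrix_group_mulA K G HG) (@matrix_group_mul1 K G HG) (@matrix_group_mulV K G HG).

Section MatrixGroupTheory.
Variables (K : fieldType) (G : {fset 'M[K]_3}) (HG : is_finite_subgroup_SL3 G).
Local Notation gT := (matrix_group HG).

Lemma val_matrix_groupM (x y : gT) : val (x * y)%g = val x *m val y. Proof. by []. Qed.

Lemma val_matrix_groupX (x : gT) n : val (x ^+ n)%g = val x ^+ n.
Proof. by elim: n => [|n IHn]; rewrite ?expgS ?exprS ?val_matrix_groupM ?IHn. Qed.

Lemma card_matrix_group : #|gT| = #|` G|. Proof. by rewrite -cardfE. Qed.

Hypotheses (charK3 : 3%N \in [pchar K]) (smallG : small G) (G3 : 3%N.-nat #|` G|).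

Let charM3 : 3%N \in [pchar 'M[K]_3]. Proof. by rewrite (pchar_lalg 'M[K]_3). Qed.

Lemma unipotent_matrix_group (x : gT) : (val x - 1) ^+ 3 = 0.
Proof.
have [m cardG] := p_natP G3.
have xm : val x ^+ (3 ^ m)%N = 1.
  by rewrite -val_matrix_groupX -cardG -card_matrix_group -cardsT expg_cardG ?inE.
apply: (@nilpotent_mx_expSn _ 2 _ (3 ^ m)%N).
by rewrite (exprB1_pchar _ _ charM3) xm subrr.
Qed.

Lemma expg3_matrix_group (x : gT) : (x ^+ 3)%g = 1%g.
Proof.
apply: val_inj; rewrite val_matrix_groupX; apply/eqP; rewrite -subr_eq0.
by rewrite -(exprB1_pchar _ 1 charM3) unipotent_matrix_group.
Qed.

Lemma rank_matrix_group (x : gT) : x != 1%g -> \rank (val x - 1) = 2%N.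
Proof.
move=> x_neq1; apply: rank_unipotent_nonreflection (unipotent_matrix_group x) _ _.
  by apply: contra x_neq1 => /eqP val_x1; apply/eqP/val_inj.
exact: smallG (fsvalP x).
Qed.

Lemma abelian_matrix_group : abelian [set: gT].
Proof.
have pG : pgroup 3 [set: gT] by rewrite /pgroup cardsT card_matrix_group.
have [Z1|/trivgPn[z /centerP[_ cz] z_neq1]] := eqVneq ('Z([set: gT]))%g 1%g.
  by rewrite (trivg_center_pgroup pG Z1) abelian1.
pose N := val z - 1.
have cN (x : gT) : GRing.comm (val x) N.
  have := congr1 val (cz x (in_setT x)); rewrite !val_matrix_groupM => czx.
  by rewrite /GRing.comm /N mulrBr mulrBl mulr1 mul1r; congr (_ - _).
have N2_neq0 : N ^+ 2 != 0 by apply: sqr_mx_neq0; rewrite rank_matrix_group.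
apply/centsP => x _ y _; apply: val_inj; rewrite !val_matrix_groupM.
exact: regular_nilpotent_cent_comm (unipotent_matrix_group z) N2_neq0 (cN x) (cN y).
Qed.

Lemma abelem_matrix_group : abelem 3 [set: gT].
Proof.
apply/abelemP => //; split; first exact: abelian_matrix_group.
by move=> x _; apply: expg3_matrix_group.
Qed.

End MatrixGroupTheory.

HB.instance Definition _ r := Finite.copy (C3pow r) {ffun 'I_r -> 'Z_3}.
HB.instance Definition _ r := GRing.Zmodule.copy (C3pow r) {ffun 'I_r -> 'Z_3}.

Definition C3pow_group r : finGroupType := FinRing.Zmodule_to_finGroup (C3pow r).

Lemma abelem_C3pow r : abelem 3 [set: C3pow_group r].
Proof.
apply/abelemP => //; split; first exact: FinRing.zmod_abelian.
move=> x _; rewrite FinRing.zmodXgE FinRing.zmod1gE; apply/ffunP => i.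
by rewrite ffunMnE ffunE; case: (x i) => -[|[|[|//]]] ?; apply: val_inj.
Qed.

Lemma iso_C3pow_of_isog (K : fieldType) (G : {fset 'M[K]_3})
    (HG : is_finite_subgroup_SL3 G) r :
  [set: C3pow_group r] \isog [set: matrix_group HG] -> iso_C3pow G r.
Proof.
case/isogP=> f /injmP f_inj f_im.
exists (fun a : C3pow r => val (f a)); split.
- by move=> a b /val_inj fab; apply: f_inj; rewrite ?inE.
- by move=> a; apply: fsvalP.
- move=> g Gg; have : FSetSub Gg \in (f @* [set: C3pow_group r])%g by rewrite f_im inE.
  by rewrite morphimEdom => /imsetP[a _ fa]; exists a; rewrite -fa.
- by move=> a b; rewrite -val_matrix_groupM -morphM ?inE.
Qed.

Theorem lemma6p2 (K : closedFieldType) (r : nat)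
  (G : {fset 'M[K]_3}) :
  3%N \in [pchar K] ->
  is_finite_subgroup_SL3 G ->
  small G ->
  #|` G| = (3 ^ r)%N ->
  iso_C3pow G r.
Proof.
move=> charK3 HG smallG cardG.
have G3 : 3%N.-nat #|` G| by rewrite cardG pnatX pnat_id.
apply: iso_C3pow_of_isog; rewrite isog_sym.
rewrite (isog_abelem_card _ (abelem_matrix_group HG charK3 smallG G3)) abelem_C3pow andTb.
by rewrite !cardsT card_matrix_group cardG card_ffun !card_ord.
Qed.
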